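(* There is an absolute constant $C>0$ such that the following holds. Let $\alpha\ge1$, $\rho\in(0,1]$, and let $A,H,Z$ be as in the model of the context with $|A_{ij}|\le\Gamma$ for all $(i,j)$, the rows $\eta_{i,\cdot}$ of $H$ independent, mean zero with $\|\eta_{i,\cdot}\|_{\psi_\alpha}\le K_\alpha$, and the $\pi_{ij}$ i.i.d. Bernoulli$(\rho)$ independent of $H$. Then $$\mathbb{P}\Big\{\max_{j\in[p]}\|Z_{\cdot,j}-\rho A_{\cdot,j}\|_2^2>9C(K_\alpha+\Gamma)^2N\log^{2/\alpha}(Np)\Big\}\le\frac{2}{N^8p^8}.$$
   Context: For a random variable $X$, $\|X\|_{\psi_\alpha}=\inf\{t>0:\mathbb{E}\exp(|X|^\alpha/t^\alpha)\le2\}$; for a random vector $X$, $\|X\|_{\psi_\alpha}=\sup_{\|v\|_2=1}\|\langle X,v\rangle\|_{\psi_\alpha}$. Model: $A\in\mathbb{R}^{N\times p}$ deterministic, $H$ random with rows $\eta_{i,\cdot}$ and entries $\eta_{ij}$; $Z_{ij}=A_{ij}+\eta_{ij}$ if $\pi_{ij}=1$ and $Z_{ij}=0$ (unobserved entry identified with 0) if $\pi_{ij}=0$. *)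

From HB Require Import structures.
From mathcomp Require Import all_boot all_order all_algebra.
From mathcomp Require Import all_classical all_reals all_analysis.
Set Implicit Arguments. Unset Strict Implicit. Unset Printing Implicit Defensive.
Import Order.TTheory GRing.Theory Num.Theory.
Local Open Scope classical_set_scope.
Local Open Scope ring_scope.

Section Defs.
Context {d : measure_display} {T : measurableType d} {R : realType}.

Definition sigma_of (K : Type) (X : K -> T -> R) : set (set T) :=
  <<s [set A | exists k B, measurable B /\ A = X k @^-1` B] >>.

Definition mutual_indep (P : probability T R) (I : finType)
    (F : I -> set (set T)) : Prop :=
  forall (J : {set I}) (A : I -> set T),
    (forall i, i \in J -> F i (A i)) ->
    P (\bigcap_(i in [set i | i \in J]) A i) = (\prod_(i in J) P (A i))%E.

Definition psi_norm (P : probability T R) (alpha : R) (X : T -> R) : \bar R :=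
  ereal_inf [set t%:E | t in
    [set t : R | 0 < t /\
      (\int[P]_w (expR ((`|X w| `^ alpha) / (t `^ alpha)))%:E <= 2%:E)%E]].

Definition psi_norm_vec (P : probability T R) (alpha : R) (p : nat)
    (X : 'I_p -> T -> R) : \bar R :=
  ereal_sup [set psi_norm P alpha (fun w => \sum_(j < p) v j * X j w) | v in
    [set v : 'I_p -> R | \sum_(j < p) v j ^+ 2 = 1]].

End Defs.

Definition Zobs {T : Type} {R : realType} (Aij : R) (eta pi : T -> R) (w : T) : R :=
  if pi w == 1 then Aij + eta w else 0.

From HB Require Import structures.
From mathcomp Require Import all_boot all_order all_algebra.
From mathcomp Require Import all_classical all_reals all_analysis.
From mathcomp Require Import measurable_realfun lra ring.
Set Implicit Arguments. Unset Strict Implicit. Unset Printing Implicit Defensive.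
Import Order.TTheory GRing.Theory Num.Theory.
Local Open Scope classical_set_scope.
Local Open Scope ring_scope.

(* If every noise entry of column j satisfies |eta_ij| <= M, then every entry of
   Z_{.,j} - rho A_{.,j} is at most Gamma + M in absolute value (only rho in
   [0, 1] is used), so the squared column norm is at most N (Gamma + M)^2.
   With M = 2 (K + Gamma) (9 ln(Np))^(1/alpha) this is below the threshold, and
   the psi_alpha Markov bound P(|eta_ij| > M) <= 2 exp(-(M / 2(K + Gamma))^alpha)
   = 2 (Np)^-9 together with a union bound over the Np entries gives
   2 (Np)^-8.  If K + Gamma = 0
   the threshold vanishes, but then eta = 0 almost surely. *)

Lemma half_le_ln (R : realType) (x : R) : 2 <= x -> 2^-1 <= ln x.
Proof.
move=> x2; have := @le_ln1Dx R (- 2^-1) ltac:(lra).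
rewrite (_ : 1 + - 2^-1 = 2^-1); last lra.
rewrite lnV ?posrE // lerN2 => ln2; apply: le_trans ln2 _.
by rewrite ler_ln ?posrE //; lra.
Qed.

Lemma half_le_powR (R : realType) (x q : R) :
  0 <= q <= 1 -> 2^-1 <= x -> 2^-1 <= x `^ q.
Proof.
move=> /andP[q0 q1] x2; have [x1|x1] := leP 1 x.
  by apply: le_trans (_ : 1 <= x `^ q); [lra | rewrite -(powRr0 x) ler_powR].
apply: (le_trans x2); apply: ger1_powR => //; rewrite ltW // andbT.
by apply: lt_le_trans x2.
Qed.

Lemma powR_mul_root_div (R : realType) (s y a : R) : 0 < s -> 0 <= y -> 0 < a ->
  (s * y `^ a^-1) `^ a / s `^ a = y.
Proof.
move=> s0 y0 a0; rewrite powRM ?powR_ge0 ?ltW // -powRrM mulVf ?gt_eqF // powRr1 //.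
by rewrite mulrAC mulfV ?mul1r // gt_eqF // powR_gt0.
Qed.

Lemma dev_threshold_le (R : realType) (N : nat) (K Gamma L alpha : R) :
  0 <= K -> 0 <= Gamma -> 1 <= alpha -> 2^-1 <= L ->
  N%:R * (Gamma + 2 * (K + Gamma) * (9 * L) `^ alpha^-1) ^+ 2 <=
  9 * 50 * (K + Gamma) ^+ 2 * N%:R * L `^ (2 / alpha).
Proof.
move=> K0 G0 alpha1 L_half.
have alpha0 : 0 < alpha := lt_le_trans ltr01 alpha1.
have alpha_inv : 0 <= alpha^-1 <= 1 by rewrite invr_ge0 invf_le1 // ltW.
set Lq := L `^ alpha^-1.
have Lq_half : 2^-1 <= Lq by exact: half_le_powR.
have -> : L `^ (2 / alpha) = Lq ^+ 2.
  by rewrite -powR_mulrn ?powR_ge0 // -powRrM mulrC.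
have root9 : (9 * L) `^ alpha^-1 <= 9 * Lq.
  rewrite powRM //; last lra.
  apply: ler_wpM2r; first exact: powR_ge0.
  by apply: ler1_powR; [rewrite ler1n | case/andP: alpha_inv].
(* [Gamma <= 2 (K + Gamma) Lq] because [Lq >= 1/2]. *)
have dev : Gamma + 2 * (K + Gamma) * (9 * L) `^ alpha^-1 <= 20 * ((K + Gamma) * Lq).
  have : 2 * (K + Gamma) * (9 * L) `^ alpha^-1 <= 2 * (K + Gamma) * (9 * Lq).
    by rewrite ler_wpM2l //; lra.
  nra.
have dev0 : 0 <= Gamma + 2 * (K + Gamma) * (9 * L) `^ alpha^-1.
  by rewrite addr_ge0 // !mulr_ge0 ?powR_ge0 //; lra.
have KGLq0 : 0 <= (K + Gamma) * Lq by rewrite mulr_ge0 ?powR_ge0 //; lra.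
rewrite [leRHS](_ : _ = N%:R * (450 * ((K + Gamma) * Lq) ^+ 2)); last ring.
rewrite ler_wpM2l //; apply: le_trans (_ : (20 * ((K + Gamma) * Lq)) ^+ 2 <= _).
  by rewrite lerXn2r ?nnegrE // mulr_ge0.
rewrite exprMn ler_wpM2r ?exprn_ge0 //; lra.
Qed.

Section measure_cover.
Context {d : measure_display} {T : measurableType d} {R : realType}.
Variable mu : {measure set T -> \bar R}.

Lemma measure_seq_cover_le (I : eqType) (s : seq I) (F : I -> set T)
    (A : set T) (c : R) :
  (forall i, measurable (F i)) -> measurable A ->
  (forall i, (mu (F i) <= c%:E)%E) ->
  A `<=` [set w | exists2 i, i \in s & F i w] ->
  (mu A <= ((size s)%:R * c)%:E)%E.
Proof.
move=> mF; elim: s A => [|a s IH] A mA Fc As.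
  have -> : A = set0 by apply/seteqP; split => // w /As [].
  by rewrite measure0 mul0r.
have mAFa : measurable (A `\` F a) by exact: measurableD.
have AFa : A `<=` F a `|` (A `\` F a).
  by move=> w Aw; have [|] := pselect (F a w); [left | right].
have mU : measurable (F a `|` (A `\` F a)) by exact: measurableU.
apply: (le_trans (le_measure _ _ _ AFa)); rewrite ?inE //.
apply: (le_trans (measureU2 _ _ _)) => //.
rewrite -natr1 mulrDl mul1r EFinD addrC; apply: leeD (Fc a).
apply: IH => // w [/As [i]]; rewrite inE => /orP[/eqP -> //|si Fi _].
by exists i.
Qed.

End measure_cover.

Lemma measurable_ltr_set {d : measure_display} {T : measurableType d}
    {R : realType} (f g : T -> R) :
  measurable_fun setT f -> measurable_fun setT g ->
  measurable [set w | f w < g w].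
Proof.
move=> mf mg; rewrite -[X in measurable X]setTI.
exact: (measurable_fun_ltr mf mg) measurableT [set true] _.
Qed.

Lemma measurable_normr_gt {d : measure_display} {T : measurableType d}
    {R : realType} (c : R) (X : T -> R) :
  measurable_fun setT X -> measurable [set w | c < `|X w|].
Proof. by move=> mX; apply: measurable_ltr_set => //; apply: measurableT_comp. Qed.

Lemma measurable_Zobs {d : measure_display} {T : measurableType d}
    {R : realType} (a : R) (eta pi : T -> R) :
  measurable_fun setT eta -> measurable_fun setT pi ->
  measurable_fun setT (Zobs a eta pi).
Proof.
move=> meta mpi; apply: measurable_fun_ifT.
- exact: measurable_fun_eqr.
- exact: measurable_funD.
- exact: measurable_cst.
Qed.

Lemma normr_Zobs_sub_le {T : Type} {R : realType} (a rho : R) (eta pi : T -> R) w :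
  0 <= rho <= 1 -> `|Zobs a eta pi w - rho * a| <= `|a| + `|eta w|.
Proof.
move=> /andP[rho0 rho1]; rewrite /Zobs; case: ifP => _.
  rewrite (_ : a + eta w - rho * a = (1 - rho) * a + eta w); last ring.
  apply: (le_trans (ler_normD _ _)); rewrite lerD2r normrM ger0_norm; last lra.
  by rewrite ler_piMl //; lra.
rewrite sub0r normrN normrM ger0_norm //.
by apply: le_trans (ler_piMl _ rho1) _; rewrite ?lerDl.
Qed.

Lemma sum_Zobs_dev_sqr_le {T : Type} {R : realType} (N : nat)
    (a : 'I_N -> R) (eta pi : 'I_N -> T -> R) (rho Gamma M : R) w :
  0 <= rho <= 1 -> (forall i, `|a i| <= Gamma) -> (forall i, `|eta i w| <= M) ->
  \sum_(i < N) (Zobs (a i) (eta i) (pi i) w - rho * a i) ^+ 2 <=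
    N%:R * (Gamma + M) ^+ 2.
Proof.
move=> rho01 aG etaM.
have term i : (Zobs (a i) (eta i) (pi i) w - rho * a i) ^+ 2 <= (Gamma + M) ^+ 2.
  have dev : `|Zobs (a i) (eta i) (pi i) w - rho * a i| <= Gamma + M.
    exact: le_trans (normr_Zobs_sub_le _ _ _ _ rho01) (lerD (aG i) (etaM i)).
  by rewrite -real_normK ?num_real // lerXn2r ?nnegrE // (le_trans _ dev).
apply: le_trans (ler_sum _ (fun i _ => term i)) _.
by rewrite sumr_const card_ord mulr_natl.
Qed.

Section psi_norm.
Context {d : measure_display} {T : measurableType d} {R : realType}.
Variable P : probability T R.

Lemma psi_norm_ge0 (alpha : R) (X : T -> R) : (0 <= psi_norm P alpha X)%E.
Proof.
by apply: le_ereal_inf_tmp => _ [t [t0 _] <-]; rewrite lee_fin ltW.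
Qed.

Lemma psi_norm_le_vec (p : nat) (alpha : R) (X : 'I_p -> T -> R) j :
  (psi_norm P alpha (X j) <= psi_norm_vec P alpha X)%E.
Proof.
have -> : X j = (fun w => \sum_(k < p) (k == j)%:R * X k w).
  apply/funext => w; rewrite (bigD1 j) //= eqxx mul1r big1 ?addr0 //.
  by move=> k /negbTE ->; rewrite mul0r.
apply: ereal_sup_ubound; exists (fun k => (k == j)%:R) => //.
rewrite /= (bigD1 j) //= eqxx expr1n big1 ?addr0 //.
by move=> k /negbTE ->; rewrite expr0n.
Qed.

Lemma psi_norm_lt_integral (alpha : R) (X : T -> R) (c : R) :
  (psi_norm P alpha X < c%:E)%E ->
  exists2 t, 0 < t < c &
    (\int[P]_w (expR ((`|X w| `^ alpha) / (t `^ alpha)))%:E <= 2%:E)%E.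
Proof.
by move=> /ereal_inf_lt[_ [t [t0 hI] <-]]; rewrite lte_fin => tc; exists t; rewrite ?t0.
Qed.

Lemma psi_markov (X : {RV P >-> R}) (alpha t eps : R) : 0 < alpha -> 0 < t -> 0 < eps ->
  (\int[P]_w (expR ((`|X w| `^ alpha) / (t `^ alpha)))%:E <= 2%:E)%E ->
  (P [set w | (eps <= `|X w|)%R] <= (2 * expR (- (eps `^ alpha / t `^ alpha)))%:E)%E.
Proof.
move=> alpha0 t0 eps0 hI.
have ta0 : 0 < t `^ alpha by exact: powR_gt0.
pose f x := expR (x `^ alpha / t `^ alpha).
have mf : measurable_fun [set: R] f.
  by apply: measurableT_comp => //; apply: measurable_funM.
have f_nd : {in Num.nneg &, {homo f : x y / x <= y}}.
  move=> x y x0 y0 xy; rewrite /f ler_expR ler_pM2r ?invr_gt0 //.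
  by apply: ge0_ler_powR => //; exact: ltW.
have := markov X eps0 mf (fun r _ => expR_ge0 _) f_nd.
rewrite unlock (_ : [set x | _] = [set w | eps <= `|X w|]); last first.
  by apply/funext => w /=; rewrite lee_fin.
move=> /le_trans /(_ hI).
by rewrite expRN mulrC EFinM lee_pdivlMl ?expR_gt0.
Qed.

Lemma psi_tail_le (X : {RV P >-> R}) (alpha K s eps : R) :
  0 < alpha -> (psi_norm P alpha X <= K%:E)%E -> K < s -> 0 < eps ->
  (P [set w | (eps < `|X w|)%R] <= (2 * expR (- (eps `^ alpha / s `^ alpha)))%:E)%E.
Proof.
move=> alpha0 XK Ks eps0.
have [t /andP[t0 ts] hI] := psi_norm_lt_integral (le_lt_trans XK (Ks : (K%:E < s%:E)%E)).
have mX : measurable [set w | eps < `|X w|] by exact: measurable_normr_gt.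
have mXe : measurable [set w | eps <= `|X w|].
  rewrite -[X in measurable X]setTI.
  apply: (measurable_fun_ler (measurable_cst _) _) measurableT [set true] _ => //.
  exact: measurableT_comp.
apply: le_trans (le_measure _ _ _ (fun w => @ltW _ _ _ _)) _; rewrite ?inE //.
apply: le_trans (psi_markov alpha0 t0 eps0 hI) _.
have epsa : 0 < eps `^ alpha by exact: powR_gt0.
have s0 : 0 < s by apply: lt_trans ts.
rewrite lee_fin ler_pM2l // ler_expR lerN2 ler_pM2l // lef_pV2 ?posrE ?powR_gt0 //.
by apply: ge0_ler_powR; rewrite ?nnegrE ?ltW.
Qed.

Lemma psi_tail_ln_le (X : {RV P >-> R}) (alpha K s x : R) (k : nat) :
  0 < alpha -> (psi_norm P alpha X <= K%:E)%E -> K < s -> 1 < x -> (0 < k)%N ->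
  (P [set w | (s * (k%:R * ln x) `^ alpha^-1 < `|X w|)%R] <= (2 / x ^+ k)%:E)%E.
Proof.
move=> alpha0 XK Ks x1 k0.
have s0 : 0 < s.
  by apply: le_lt_trans Ks; rewrite -lee_fin; exact: le_trans (psi_norm_ge0 _ _) XK.
have klnx : 0 < k%:R * ln x by rewrite mulr_gt0 ?ltr0n ?ln_gt0.
apply: le_trans (psi_tail_le alpha0 XK Ks _) _; first by rewrite mulr_gt0 ?powR_gt0.
have x0 : 0 < x := lt_trans ltr01 x1.
by rewrite powR_mul_root_div ?(ltW klnx) // expRN expRM_natl lnK ?posrE.
Qed.

Lemma psi_norm_le0_null (X : {RV P >-> R}) (alpha : R) :
  0 < alpha -> (psi_norm P alpha X <= 0%:E)%E -> P [set w | (0 < `|X w|)%R] = 0.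
Proof.
move=> alpha0 X0.
have mX (eps : R) : measurable [set w | (eps < `|X w|)%R].
  exact: measurable_normr_gt.
have tail k : P [set w | (k.+1%:R^-1 < `|X w|)%R] = 0.
  apply/eqP; rewrite eq_le measure_ge0 andbT; apply/lee_addgt0Pr => e e0.
  set eps : R := k.+1%:R^-1; have eps0 : 0 < eps by rewrite invr_gt0.
  set y := 2 / e; have y0 : 0 < y by rewrite divr_gt0.
  (* [s] is chosen so that [(eps / s) `^ alpha = y]; then [2 exp(-y) <= 2 / y = e]. *)
  set s := eps / y `^ alpha^-1; have s0 : 0 < s by rewrite divr_gt0 ?powR_gt0.
  have -> : eps = s * y `^ alpha^-1 by rewrite divfK // gt_eqF // powR_gt0.
  apply: le_trans (psi_tail_le alpha0 X0 s0 _) _; first by rewrite mulr_gt0 ?powR_gt0.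
  rewrite powR_mul_root_div ?(ltW y0) // add0e lee_fin expRN.
  have y_le_expR : y <= expR y by have := expR_ge1Dx y; lra.
  apply: le_trans (_ : 2 * y^-1 <= e).
    by rewrite ler_pM2l // lef_pV2 ?posrE ?expR_gt0.
  by rewrite /y invf_div mulrC divfK.
have -> : [set w | (0 < `|X w|)%R] = \bigcup_k [set w | (k.+1%:R^-1 < `|X w|)%R].
  apply/seteqP; split => w /=.
    by move=> /ltr_add_invr[k]; rewrite add0r => ?; exists k.
  by move=> [k _]; apply: lt_trans; rewrite invr_gt0.
apply/negligibleP; first exact: bigcupT_measurable.
by apply: negligible_bigcup => k; apply/negligibleP; [exact: mX | exact: tail].
Qed.

End psi_norm.

Section deviation.
Context {d : measure_display} {T : measurableType d} {R : realType}.
Variables (P : probability T R) (N p : nat) (A : 'I_N -> 'I_p -> R).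
Variables (eta pi : 'I_N -> 'I_p -> {RV P >-> R}) (rho Gamma : R).
Hypotheses (rho01 : 0 <= rho <= 1) (AG : forall i j, `|A i j| <= Gamma).

Lemma measurable_dev_gt (thr : R) :
  measurable [set w | exists j : 'I_p,
    (\sum_(i < N) (Zobs (A i j) (eta i j) (pi i j) w - rho * A i j) ^+ 2 > thr)%R].
Proof.
rewrite (_ : [set w | _] = \bigcup_(j in [set: 'I_p])
    [set w | thr < \sum_(i < N) (Zobs (A i j) (eta i j) (pi i j) w - rho * A i j) ^+ 2]).
  apply: fin_bigcup_measurable => // j _; apply: measurable_ltr_set => //.
  apply: measurable_sum => i; apply/measurable_funX/measurable_funB => //.
  exact: measurable_Zobs.
by apply/seteqP; split => w [j]; exists j.
Qed.

Lemma measure_dev_gt_le (M thr c : R) :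
  N%:R * (Gamma + M) ^+ 2 <= thr ->
  (forall i j, (P [set w | (M < `|eta i j w|)%R] <= c%:E)%E) ->
  (P [set w | exists j : 'I_p,
      (\sum_(i < N) (Zobs (A i j) (eta i j) (pi i j) w - rho * A i j) ^+ 2 > thr)%R]
   <= (N%:R * p%:R * c)%:E)%E.
Proof.
move=> thr_ge tail.
have -> : N%:R * p%:R = (size (enum {: 'I_N * 'I_p}))%:R :> R.
  by rewrite -cardE card_prod !card_ord natrM.
apply: (measure_seq_cover_le (F := fun ij => [set w | (M < `|eta ij.1 ij.2 w|)%R])).
- by move=> ij; apply: measurable_normr_gt.
- exact: measurable_dev_gt.
- by move=> [i j]; exact: tail.
move=> w [j thr_lt]; have [[i Mi]|small] := pselect (exists i, M < `|eta i j w|).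
  by exists (i, j); rewrite ?mem_enum.
exfalso; move: thr_lt; rewrite ltNge => /negP; apply.
apply: le_trans thr_ge; apply: sum_Zobs_dev_sqr_le => // i.
by rewrite leNgt; apply/negP => Mi; apply: small; exists i.
Qed.

End deviation.

Theorem mainTheorem11 (R : realType) :
  exists C : R, 0 < C /\
  forall (d : measure_display) (T : measurableType d) (P : probability T R)
    (N p : nat) (alpha rho Gamma K : R)
    (A : 'I_N -> 'I_p -> R)
    (eta : 'I_N -> 'I_p -> {RV P >-> R})
    (pi : 'I_N -> 'I_p -> {RV P >-> R}),
    (0 < N)%N -> (0 < p)%N ->
    1 <= alpha -> 0 < rho <= 1 ->
    (forall i j, `|A i j| <= Gamma) ->
    (* rows of H mean zero, independent, with bounded psi_alpha norm *)
    (forall i j, ('E_P[eta i j] = 0)%E) ->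
    (forall i, (psi_norm_vec P alpha (fun j => eta i j) <= K%:E)%E) ->
    mutual_indep P (fun i : 'I_N => sigma_of (fun j : 'I_p => eta i j)) ->
    (* pi_ij i.i.d. Bernoulli(rho) *)
    (forall i j w, pi i j w = 0 \/ pi i j w = 1) ->
    (forall i j, P [set w | pi i j w = 1] = rho%:E) ->
    mutual_indep P (fun ij : 'I_N * 'I_p =>
                      sigma_of (fun _ : unit => pi ij.1 ij.2)) ->
    (* pi independent of H *)
    mutual_indep P (fun b : bool =>
      if b then sigma_of (fun ij : 'I_N * 'I_p => eta ij.1 ij.2)
      else sigma_of (fun ij : 'I_N * 'I_p => pi ij.1 ij.2)) ->
    (P [set w | exists j : 'I_p,
          (\sum_(i < N) (Zobs (A i j) (eta i j) (pi i j) w - rho * A i j) ^+ 2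
           > 9 * C * (K + Gamma) ^+ 2 * N%:R * (ln (N%:R * p%:R)) `^ (2 / alpha))%R]
     <= (2 / (N%:R ^+ 8 * p%:R ^+ 8))%R%:E)%E.
Proof.
exists 50; split => // d T P N p alpha rho Gamma K A eta pi N0 p0 alpha1 /andP[rho0 rho1]
  AG _ etaK _ _ _ _ _.
have rho01 : 0 <= rho <= 1 by rewrite ltW.
have alpha0 : 0 < alpha := lt_le_trans ltr01 alpha1.
have etaK' i j : (psi_norm P alpha (eta i j) <= K%:E)%E.
  exact: le_trans (psi_norm_le_vec _ _ _ j) (etaK i).
have K0 : 0 <= K.
  by rewrite -lee_fin (le_trans (psi_norm_ge0 _ _ _) (etaK' (Ordinal N0) (Ordinal p0))).
have G0 : 0 <= Gamma := le_trans (normr_ge0 _) (AG (Ordinal N0) (Ordinal p0)).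
rewrite -exprMn; set n := N%:R * p%:R.
have [n_le1|n_gt1] := leP n 1.
  apply: le_trans (probability_le1 P (measurable_dev_gt _ _ _ _ _)) _.
  rewrite lee_fin ler_pdivlMr ?exprn_gt0 ?mulr_gt0 ?ltr0n // mul1r.
  by apply: le_trans (exprn_ile1 _ _ n_le1) _; rewrite ?mulr_ge0 // ler1n.
have n2 : 2 <= n by move: n_gt1; rewrite /n -natrM ltr1n ler_nat.
have [KG0|KG_pos] := leP (K + Gamma) 0.
  have [Kz Gz] : K = 0 /\ Gamma = 0 by lra.
  apply: le_trans (measure_dev_gt_le pi rho01 AG (M := 0) (c := 0) _ _) _.
  - by rewrite Kz Gz !addr0 expr2 !(mulr0, mul0r).
  - by move=> i j; rewrite (psi_norm_le0_null alpha0) // -Kz.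
  by rewrite mulr0 lee_fin divr_ge0 ?exprn_ge0 //; lra.
apply: le_trans (measure_dev_gt_le pi rho01 AG
  (M := 2 * (K + Gamma) * (9 * ln n) `^ alpha^-1) (c := 2 / n ^+ 9) _ _) _.
- by apply: dev_threshold_le => //; apply: half_le_ln.
- by move=> i j; apply: psi_tail_ln_le; rewrite ?etaK' //; lra.
by rewrite (_ : n * (2 / n ^+ 9) = 2 / n ^+ 8) //; field; lra.
Qed.
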